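(* Let $n$ be an odd perfect square divisible by $p^4$ for some prime $p\ge7$. Then $C_{S(n)^*}=5$.
   Context: For a natural number $n$, $\mathbb Z_n=\mathbb Z/n\mathbb Z$, $S(n)=\{x^2:x\in\mathbb Z_n\}$, $S(n)^*=S(n)\setminus\{0\}$. For $A\subseteq\mathbb Z_n$, a sequence $(y_1,\dots,y_t)$ ($t\ge1$) in $\mathbb Z_n$ is an $A$-weighted zero-sum sequence if there exist $a_1,\dots,a_t\in A$ with $\sum a_iy_i=0$. $C_A(n)$ is the least positive integer $t$ such that every sequence of length $t$ in $\mathbb Z_n$ has a nonempty subsequence of consecutive terms that is an $A$-weighted zero-sum sequence; $C_{S(n)^*}=C_{S(n)^*}(n)$. *)

From mathcomp Require Import all_boot all_order all_algebra.
Set Implicit Arguments. Unset Strict Implicit. Unset Printing Implicit Defensive.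
Import GRing.Theory.
Local Open Scope ring_scope.

(* S(n) = set of squares in Z_n ; S(n)^* = nonzero squares.  Used with 1 < n. *)
Definition sq_set (n : nat) : {set 'Z_n} := [set x * x | x : 'Z_n].
Definition sq_set_star (n : nat) : {set 'Z_n} := sq_set n :\ 0.

Definition weighted_zero_sum (n : nat) (A : {set 'Z_n}) (s : seq 'Z_n) : Prop :=
  exists a : seq 'Z_n, [/\ size a = size s, all (fun x => x \in A) a &
    \sum_(i < size s) a`_i * s`_i = 0].

Definition consec_zs_property (n : nat) (A : {set 'Z_n}) (t : nat) : Prop :=
  forall s : seq 'Z_n, size s = t ->
    exists i j : nat, [/\ (i < j)%N, (j <= t)%N &
      weighted_zero_sum A (drop i (take j s))].

Definition is_C (n : nat) (A : {set 'Z_n}) (t : nat) : Prop :=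
  [/\ (0 < t)%N, consec_zs_property A t &
      forall t', (0 < t')%N -> (t' < t)%N -> ~ consec_zs_property A t'].

From mathcomp Require Import all_boot all_order all_algebra.
From mathcomp Require Import zify ring.
Set Implicit Arguments. Unset Strict Implicit. Unset Printing Implicit Defensive.
Import GRing.Theory.
Local Open Scope ring_scope.

(* Write n = m^2 with m = M p^2.  Upper bound: among five terms y_i, either p^2 divides some
   y_i, and the nonzero square (M p)^2 kills it alone, or at least three y_i are prime to p,
   or at least three are exactly divisible by p.  Over F_p with p >= 7, three or more nonzero
   z_i always admit sum s_i^2 z_i = 0 with every s_i nonzero; Hensel lifting makes this hold
   modulo a power of p, and the weights (M s_i)^2 are then nonzero squares killing all five
   terms.  Lower bound: let P = rad m and let -c be a non-residue modulo every prime q | m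
   (CRT).  Descent at each q shows that x1^2 + P x2^2 + c x3^2 + c P x4^2 = 0 mod m^2 forces
   m | x_i, so no block of consecutive terms of (1, P, c, c P) is a zero sum with nonzero
   square weights. *)

Definition is_square (R : finNzRingType) (x : R) : bool := [exists y, y * y == x].

Lemma is_squareP (R : finNzRingType) (x : R) : reflect (exists y, y * y = x) (is_square x).
Proof. by apply: (iffP existsP) => -[y /eqP]; exists y. Qed.

Lemma is_square_sqr (R : finNzRingType) (x : R) : is_square (x * x).
Proof. by apply/is_squareP; exists x. Qed.

Lemma is_square0 (R : finNzRingType) : is_square (0 : R).
Proof. by rewrite -(mul0r 0) is_square_sqr. Qed.

Lemma nonsquare_neq0 (R : finNzRingType) (x : R) : ~~ is_square x -> x != 0.
Proof. by apply: contraNneq => ->; apply: is_square0. Qed.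

Lemma is_squareM (R : finComNzRingType) (x y : R) :
  is_square x -> is_square y -> is_square (x * y).
Proof. by move=> /is_squareP[u <-] /is_squareP[v <-]; rewrite mulrACA is_square_sqr. Qed.

Lemma is_squareV (F : finFieldType) (x : F) : is_square x^-1 = is_square x.
Proof.
suff sqV (y : F) : is_square y -> is_square y^-1.
  by apply/idP/idP => /sqV //; rewrite invrK.
by move=> /is_squareP[u <-]; rewrite invfM is_square_sqr.
Qed.

Section PrimeField.

Variable p : nat.
Hypotheses (p_pr : prime p) (p_odd : odd p).

Lemma Fp_nat_eq0 k : ((k%:R : 'F_p) == 0) = (p %| k)%N.
Proof. by rewrite -(inj_eq val_inj) /= val_Fp_nat. Qed.

Lemma Fp_nat_neq0 k : (0 < k < p)%N -> (k%:R : 'F_p) != 0.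
Proof. by move=> /andP[k_gt0 k_lt]; rewrite Fp_nat_eq0; apply/negP => /(dvdn_leq k_gt0); lia. Qed.

Lemma succ_double_half : (p./2 + p./2).+1 = p.
Proof. by rewrite addnn -{2}(odd_double_half p) p_odd. Qed.

Lemma card_squares_Fp : (p./2.+1 <= #|[set x : 'F_p | is_square x]|)%N.
Proof.
pose sq (i : 'I_(p./2.+1)) : 'F_p := i%:R * i%:R.
have sq_inj : injective sq.
  move=> i j /eqP; rewrite -subr_eq0.
  have -> : sq i - sq j = (i%:R - j%:R) * (i%:R + j%:R) by rewrite /sq; ring.
  have lt_ij : (i + j < p)%N.
    by have := ltn_ord i; have := ltn_ord j; have := succ_double_half; lia.
  rewrite mulf_eq0 subr_eq0 -natrD Fp_nat_eq0 => /orP[/eqP /(congr1 val)|].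
    by rewrite /= !val_Fp_nat // !modn_small => [/val_inj //||]; lia.
  have [ij0 _|ij_gt0 /(dvdn_leq ij_gt0)] := posnP (i + j); last lia.
  by apply: val_inj => /=; lia.
rewrite -{1}(card_ord p./2.+1) -(card_imset _ sq_inj).
by apply/subset_leq_card/subsetP => _ /imsetP[i _ ->]; rewrite inE is_square_sqr.
Qed.

(* Multiplying by a non-square [a] maps the [#|Q|] elements of [b |: Q :\ 0] into
   the complement of the set [Q] of squares, so [2 #|Q| <= p]. *)
Lemma nonsquareM (a b : 'F_p) :
  ~~ is_square a -> ~~ is_square b -> is_square (a * b).
Proof.
move=> na nb; have [//|nab] := boolP (is_square (a * b)); exfalso.
set Q := [set x : 'F_p | is_square x].
have a_neq0 := nonsquare_neq0 na.
have to_nonsq : ( *%R a) @: (b |: (Q :\ 0)) \subset ~: Q.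
  apply/subsetP => _ /imsetP[x + ->]; rewrite !inE.
  case/orP => [/eqP-> // | /andP[x_neq0 /is_squareP[v hv]]].
  apply: contra na => /is_squareP[w hw].
  have v_neq0 : v != 0 by apply: contraNneq x_neq0 => v0; rewrite -hv v0 mulr0.
  by apply/is_squareP; exists (w / v); rewrite -[a](mulfK x_neq0) -hw -hv; field.
have := subset_leq_card to_nonsq.
rewrite card_imset; last exact: mulfI.
rewrite cardsU1 !inE (negbTE nb) andbF /=.
have := cardsC Q; rewrite card_Fp //.
have := cardsD1 0 Q; rewrite inE is_square0 /=.
have := card_squares_Fp; have := succ_double_half; rewrite -/Q.
move: #|Q| #|~: Q| #|Q :\ 0| p./2 => q c d h; lia.
Qed.

Lemma exists_nonsquare : exists t : 'F_p, ~~ is_square t.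
Proof.
apply/existsP; rewrite -negb_forall; apply: contraTN p_odd => /forallP all_sq.
pose sq (x : 'F_p) := x * x.
have sq_onto : sq @: setT = setT.
  apply/setP => y; rewrite inE; have /is_squareP[x <-] := all_sq y.
  by apply/imsetP; exists x.
have /imset_injP sq_inj : #|sq @: setT| == #|[set: 'F_p]| by rewrite sq_onto.
have := sq_inj 1 (-1) (in_setT _) (in_setT _).
rewrite /sq mulrNN => /(_ erefl) /eqP; rewrite -subr_eq0 opprK -mulr2n Fp_nat_eq0.
by rewrite dvdn_prime2 // => /eqP ->.
Qed.

Lemma consecutive_nonsquare : exists g : 'F_p, g != 0 /\ ~~ is_square (g * g + 1).
Proof.
have [t] := exists_nonsquare; rewrite -(natr_Zp t); elim: (val t) => [|k IH].
  by rewrite is_square0.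
have [/is_squareP[g hg] | /IH //] := boolP (is_square (k%:R : 'F_p)).
rewrite -natr1 -hg => nsq; exists g; split => //.
by apply: contraNneq nsq => g0; rewrite g0 mul0r add0r -(mulr1 1) is_square_sqr.
Qed.

Lemma square_among_three (a b c : 'F_p) : a != 0 ->
  [|| is_square (a * b), is_square (a * c) | is_square (b * c)].
Proof.
move=> a_neq0; have [//|nab] := boolP (is_square (a * b)).
have [//|nac /=] := boolP (is_square (a * c)).
have := is_squareM (nonsquareM nab nac) (is_square_sqr a^-1).
suff -> : a * b * (a * c) * (a^-1 * a^-1) = b * c by [].
by field.
Qed.

End PrimeField.

Lemma prime_gt2_odd p : prime p -> (2 < p)%N -> odd p.
Proof. by move=> p_pr; case: (even_prime p_pr) => [->|]. Qed.

Section PrimeFieldGe7.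

Variable p : nat.
Hypotheses (p_pr : prime p) (p_ge7 : (7 <= p)%N).

Let p_odd : odd p. Proof. by apply: prime_gt2_odd; lia. Qed.

Let small_neq0 k : (0 < k < 7)%N -> (k%:R : 'F_p) != 0.
Proof. by move=> k_small; apply: Fp_nat_neq0; lia. Qed.

(* One of [2 = 1 + 1], [5 = 4 + 1] and [10 = 9 + 1 = 2 * 5] is a square. *)
Lemma consecutive_squares : exists g k : 'F_p, [/\ g != 0, k != 0 & g * g + 1 = k * k].
Proof.
suff [g [g_neq0 /is_squareP[k hk] sq_neq0]] :
    exists g : 'F_p, [/\ g != 0, is_square (g * g + 1) & g * g + 1 != 0].
  by exists g, k; split=> //; apply: contraNneq sq_neq0 => k0; rewrite -hk k0 mulr0.
have sqr_succ j : (j%:R * j%:R + 1 : 'F_p) = (j * j).+1%:R by rewrite -natrM natr1.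
have [sq2 | n2] := boolP (is_square (2%:R : 'F_p)).
  by exists 1%:R; rewrite sqr_succ !small_neq0.
have [sq5 | n5] := boolP (is_square (5%:R : 'F_p)).
  by exists 2%:R; rewrite sqr_succ !small_neq0.
exists 3%:R; rewrite sqr_succ (natrM _ 2 5) nonsquareM // small_neq0 //.
by rewrite mulf_neq0 ?small_neq0.
Qed.

Lemma sum_two_nonzero_squares (d : 'F_p) : d != 0 ->
  exists u v : 'F_p, [/\ u != 0, v != 0 & u * u + v * v = d].
Proof.
move=> d_neq0; have [/is_squareP[e he] | nd] := boolP (is_square d).
  have e_neq0 : e != 0 by apply: contraNneq d_neq0 => e0; rewrite -he e0 mulr0.
  have [g [k [g_neq0 k_neq0 hgk]]] := consecutive_squares.
  exists (e * g / k), (e / k); split; rewrite ?mulf_neq0 ?invr_eq0 //.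
  have -> : e * g / k * (e * g / k) + e / k * (e / k) = e * e * (g * g + 1) / (k * k).
    by field.
  by rewrite hgk mulfK ?mulf_neq0 // he.
have [g [g_neq0 ng]] := consecutive_nonsquare p_pr p_odd.
have g1_neq0 := nonsquare_neq0 ng.
have /is_squareP[l hl] : is_square (d / (g * g + 1)).
  by apply: nonsquareM; rewrite ?is_squareV.
have l_neq0 : l != 0.
  by apply: contraTneq (mulf_neq0 d_neq0 (invr_neq0 g1_neq0)) => l0; rewrite -hl l0 mulr0.
exists (l * g), l; split; rewrite ?mulf_neq0 //.
have -> : l * g * (l * g) + l * l = l * l * (g * g + 1) by ring.
by rewrite hl divfK.
Qed.

Lemma binary_sq_form_onto (a b c : 'F_p) :
  a != 0 -> b != 0 -> is_square (a * b) -> c != 0 ->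
  exists x y : 'F_p, [/\ x != 0, y != 0 & x * x * a + y * y * b = c].
Proof.
move=> a_neq0 b_neq0 /is_squareP[w hw] c_neq0.
have w_neq0 : w != 0.
  by apply: contraTneq (mulf_neq0 a_neq0 b_neq0) => w0; rewrite -hw w0 mulr0.
have [u [v [u_neq0 v_neq0 huv]]] := sum_two_nonzero_squares (mulf_neq0 c_neq0 (invr_neq0 a_neq0)).
exists u, (v * a / w); split; rewrite ?mulf_neq0 ?invr_neq0 //.
have -> : b = w * w / a by rewrite hw mulrC mulKf.
rewrite -[c](divfK a_neq0) -huv; field.
by rewrite a_neq0 w_neq0.
Qed.

Section WeightedSum.

Variables (T : finType) (I : {set T}) (z : T -> 'F_p).
Hypothesis z_neq0 : {in I, forall i, z i != 0}.

(* Weight [ic] by [e] in {1, 2} so that the terms outside [ia], [ib] do not cancel. *)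
Lemma sq_weighted_sum_eq0_of_pair ia ib ic :
  ia \in I -> ib \in I -> ic \in I -> ia != ib -> ia != ic -> ib != ic ->
  is_square (z ia * z ib) ->
  exists s : T -> 'F_p, {in I, forall i, s i != 0} /\ \sum_(i in I) s i * s i * z i = 0.
Proof.
move=> Ia Ib Ic nab nac nbc sq_ab.
set S := \sum_(i in I :\ ia :\ ib :\ ic) z i.
have [e [e_neq0 rest_neq0]] : exists e : 'F_p, e != 0 /\ - (e * e * z ic + S) != 0.
  have [rest1 | ] := eqVneq (1 * 1 * z ic + S) 0; last by exists 1; rewrite oppr_eq0 oner_neq0.
  exists 2%:R; split; rewrite ?oppr_eq0 ?small_neq0 //.
  have -> : 2%:R * 2%:R * z ic + S = 3%:R * z ic + (1 * 1 * z ic + S) by ring.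
  by rewrite rest1 addr0 mulf_neq0 ?small_neq0 ?z_neq0.
have [x [y [x_neq0 y_neq0 hxy]]] := binary_sq_form_onto (z_neq0 Ia) (z_neq0 Ib) sq_ab rest_neq0.
pose s i := if i == ia then x else if i == ib then y else if i == ic then e else 1.
exists s; split.
  by move=> i _; rewrite /s; do 3?case: ifP => _ //; rewrite oner_neq0.
have Ib' : ib \in I :\ ia by rewrite !inE eq_sym nab Ib.
have Ic' : ic \in I :\ ia :\ ib by rewrite !inE ![ic == _]eq_sym nac nbc Ic.
rewrite (big_setD1 ia) // (big_setD1 ib) // (big_setD1 ic) //=.
have -> : \sum_(i in I :\ ia :\ ib :\ ic) s i * s i * z i = S.
  apply: eq_bigr => i; rewrite !inE /s => /and4P[/negbTE-> /negbTE-> /negbTE-> _].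
  by rewrite !mul1r.
rewrite /s !eqxx ![_ == ia]eq_sym [ic == ib]eq_sym (negbTE nab) (negbTE nac) (negbTE nbc).
by rewrite addrA hxy addNr.
Qed.

Lemma sq_weighted_sum_eq0 : (3 <= #|I|)%N ->
  exists s : T -> 'F_p, {in I, forall i, s i != 0} /\ \sum_(i in I) s i * s i * z i = 0.
Proof.
move=> I_ge3.
have [i1 I1] : exists i1, i1 \in I by apply/card_gt0P; lia.
have [i2 I2] : exists i2, i2 \in I :\ i1.
  by apply/card_gt0P; have := cardsD1 i1 I; rewrite I1; lia.
have [i3 I3] : exists i3, i3 \in I :\ i1 :\ i2.
  apply/card_gt0P; have := cardsD1 i2 (I :\ i1); have := cardsD1 i1 I.
  by rewrite I1 I2; lia.
move: I2 I3; rewrite !inE => /andP[n21 I2] /and3P[n32 n31 I3].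
have [n12 n13 n23] : [/\ i1 != i2, i1 != i3 & i2 != i3] by split; rewrite eq_sym.
case/or3P: (square_among_three p_pr p_odd (z i2) (z i3) (z_neq0 I1)) => sq.
- exact: (sq_weighted_sum_eq0_of_pair I1 I2 I3).
- exact: (sq_weighted_sum_eq0_of_pair I1 I3 I2).
- exact: (sq_weighted_sum_eq0_of_pair I2 I3 I1).
Qed.

End WeightedSum.

End PrimeFieldGe7.

Section HenselLifting.

Variable p : nat.
Hypotheses (p_pr : prime p) (p_odd : odd p).

(* Newton step: [t + p^(k+1) j] solves the congruence mod [p^(k+2)] when
   [2 t z j = - (t^2 z + R) / p^(k+1)] mod [p]. *)
Lemma sq_lift (s z R k : nat) : ~~ (p %| s)%N -> ~~ (p %| z)%N -> (p %| s * s * z + R)%N ->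
  exists t, ~~ (p %| t)%N /\ (p ^ k.+1 %| t * t * z + R)%N.
Proof.
move=> ps pz ps0; elim: k => [|k [t [pt /dvdnP[w hw]]]]; first by exists s; rewrite expn1.
have two_tz_neq0 : ((2 * t * z)%:R : 'F_p) != 0.
  have p_ndvd2 : ~~ (p %| 2)%N by rewrite dvdn_prime2 //; apply: contraTneq p_odd => ->.
  by rewrite Fp_nat_eq0 // !Euclid_dvdM // (negbTE p_ndvd2) (negbTE pt) (negbTE pz).
pose j := val (- w%:R / (2 * t * z)%:R : 'F_p).
have dvd_step : (p %| w + 2 * t * z * j)%N.
  by rewrite -Fp_nat_eq0 // natrD natrM natr_Zp mulrC divfK // addrN.
exists (t + p ^ k.+1 * j)%N; split.
  by rewrite dvdn_addl // expnS -mulnA dvdn_mulr.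
have -> : ((t + p ^ k.+1 * j) * (t + p ^ k.+1 * j) * z + R =
    t * t * z + R + p ^ k.+1 * (2 * t * z * j) + p ^ k.+1 * p ^ k.+1 * (j * j * z))%N.
  by ring.
rewrite hw; set P := (p ^ k.+1)%N.
have -> : (w * P + P * (2 * t * z * j) + P * P * (j * j * z) =
    P * (w + 2 * t * z * j + P * (j * j * z)))%N by ring.
rewrite expnSr dvdn_pmul2l ?expn_gt0 ?prime_gt0 //.
by rewrite dvdn_add // /P expnS -mulnA dvdn_mulr.
Qed.

End HenselLifting.

Lemma sq_weighted_sum_dvd_pow p k (T : finType) (I : {set T}) (z : T -> nat) R :
  prime p -> (7 <= p)%N -> (3 <= #|I|)%N -> {in I, forall i, ~~ (p %| z i)%N} ->
  (p %| R)%N ->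
  exists t : T -> nat, {in I, forall i, ~~ (p %| t i)%N} /\
    (p ^ k.+1 %| \sum_(i in I) t i * t i * z i + R)%N.
Proof.
move=> p_pr p_ge7 I_ge3 pz pR; have p_odd : odd p by apply: prime_gt2_odd; lia.
have [|s [s_neq0 s_sum]] := sq_weighted_sum_eq0 p_pr p_ge7 (z := fun i => (z i)%:R) _ I_ge3.
  by move=> i /pz; rewrite Fp_nat_eq0.
pose t i := val (s i).
have pt : {in I, forall i, ~~ (p %| t i)%N}.
  by move=> i /s_neq0; rewrite -Fp_nat_eq0 // natr_Zp.
have [i0 I0] : exists i0, i0 \in I by apply/card_gt0P; lia.
set Rest := (\sum_(i in I :\ i0) t i * t i * z i + R)%N.
have Rest_sol : (p %| t i0 * t i0 * z i0 + Rest)%N.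
  rewrite /Rest addnA -big_setD1 // dvdn_addl // -Fp_nat_eq0 // natr_sum.
  by apply/eqP; apply: etrans s_sum; apply: eq_bigr => i _; rewrite !natrM natr_Zp.
have [t0 [pt0 t0_sol]] := sq_lift p_pr p_odd k (pt i0 I0) (pz i0 I0) Rest_sol.
exists (fun i => if i == i0 then t0 else t i); split.
  by move=> i Ii; case: eqP => // _; apply: pt.
rewrite (big_setD1 i0) //= eqxx -addnA (eq_bigr (fun i => t i * t i * z i))%N // => i.
by rewrite !inE => /andP[/negbTE-> _].
Qed.

Lemma Zn_nat_eq0 n k : (1 < n)%N -> ((k%:R : 'Z_n) == 0) = (n %| k)%N.
Proof. by move=> n_gt1; rewrite -(inj_eq val_inj) /= val_Zp_nat. Qed.

Lemma natr_sqr_in_sq_set_star n x : (1 < n)%N -> ~~ (n %| x * x)%N ->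
  ((x * x)%:R : 'Z_n) \in sq_set_star n.
Proof.
move=> n_gt1 n_ndvd; rewrite !inE Zn_nat_eq0 // n_ndvd /=.
by apply/imsetP; exists x%:R; rewrite // natrM.
Qed.

Lemma pfactor2_dvd_of_sqr p w : prime p -> (p ^ 4 %| w * w)%N -> (p ^ 2 %| w)%N.
Proof.
move=> p_pr; have [->|w_gt0] := posnP w; first by rewrite dvdn0.
by rewrite !pfactor_dvdn ?muln_gt0 ?w_gt0 // lognM //; lia.
Qed.

Section UpperBound.

Variables (M p : nat).
Hypotheses (M_gt0 : (0 < M)%N) (p_pr : prime p) (p_ge7 : (7 <= p)%N).

Local Notation n := (M * M * p ^ 4)%N.

Let n_gt1 : (1 < n)%N.
Proof.
have : (2 ^ 4 <= p ^ 4)%N by rewrite leq_exp2r // prime_gt1.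
by move: (p ^ 4)%N => q; nia.
Qed.

Let p_ndvd1 : ~~ (p %| 1)%N.
Proof. by rewrite dvdn1; case: eqP p_pr => // ->. Qed.

Let p2_ndvd_p : ~~ (p ^ 2 %| p)%N.
Proof. by rewrite -[X in (_ %| X)%N]expn1 dvdn_Pexp2l // prime_gt1. Qed.

Let sqr_p2_ndvd t : ~~ (p %| t)%N -> ~~ (p ^ 2 %| t)%N.
Proof. by apply: contra => /(dvdn_trans _); apply; rewrite dvdn_exp. Qed.

Lemma weighted_zero_sum_of_pow_dvd (s : seq 'Z_n) (w : nat -> nat) :
  (forall i, (i < size s)%N -> ~~ (p ^ 2 %| w i)%N) ->
  (p ^ 4 %| \sum_(i < size s) w i * w i * val (s`_i)%R)%N ->
  weighted_zero_sum (sq_set_star n) s.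
Proof.
move=> w_ndvd sum_dvd.
exists (mkseq (fun i => ((M * w i) * (M * w i))%:R) (size s)); split.
- by rewrite size_mkseq.
- apply/allP => _ /mapP[i + ->]; rewrite mem_iota => /w_ndvd w_i.
  apply: natr_sqr_in_sq_set_star => //; apply: contra w_i => dvd_sqr.
  apply: (pfactor2_dvd_of_sqr p_pr); rewrite -(@dvdn_pmul2l (M * M)) ?muln_gt0 ?M_gt0 //.
  by rewrite (_ : M * M * (w i * w i) = M * w i * (M * w i))%N //; ring.
- rewrite (eq_bigr (fun i : 'I_(size s) => ((M * M * (w i * w i * val (s`_i)%R))%N)%:R)); last first.
    by move=> i _; rewrite nth_mkseq // !natrM natr_Zp; ring.
  by apply/eqP; rewrite -natr_sum Zn_nat_eq0 // -big_distrr dvdn_pmul2l ?muln_gt0 ?M_gt0.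
Qed.

Let split_sum (T : finType) (U : {set T}) (F : T -> nat) :
  (\sum_i F i = \sum_(i in U) F i + \sum_(i in ~: U) F i)%N.
Proof. by rewrite (bigID (mem U)) /=; congr (_ + _); apply: eq_bigl => i; rewrite inE. Qed.

Lemma sq_weights_of_many_units (T : finType) (y : T -> nat) :
  (3 <= #|[set i | ~~ (p %| y i)%N]|)%N ->
  exists w : T -> nat, (forall i, ~~ (p ^ 2 %| w i)%N) /\ (p ^ 4 %| \sum_i w i * w i * y i)%N.
Proof.
move=> U_ge3; set U := [set i | ~~ (p %| y i)%N] in U_ge3.
have pR : (p %| \sum_(i in ~: U) y i)%N by apply: dvdn_sum => i; rewrite !inE negbK.
have y_U : {in U, forall i, ~~ (p %| y i)%N} by move=> i; rewrite inE.
have [t [pt t_sol]] := sq_weighted_sum_dvd_pow 3 p_pr p_ge7 U_ge3 y_U pR.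
exists (fun i => if i \in U then t i else 1%N); split.
  by move=> i; apply: sqr_p2_ndvd; case: ifPn => // /pt.
rewrite (split_sum U); congr (_ %| _ + _)%N: t_sol.
  by apply: eq_bigr => i ->.
by apply: eq_bigr => i; rewrite inE => /negbTE ->; rewrite !mul1n.
Qed.

Lemma sq_weights_of_many_multiples (T : finType) (y : T -> nat) :
  (forall i, ~~ (p ^ 2 %| y i)%N) -> (3 <= #|[set i | (p %| y i)%N]|)%N ->
  exists w : T -> nat, (forall i, ~~ (p ^ 2 %| w i)%N) /\ (p ^ 4 %| \sum_i w i * w i * y i)%N.
Proof.
move=> y_ndvd V_ge3; set V := [set i | (p %| y i)%N] in V_ge3.
have y_V : {in V, forall i, y i = (y i %/ p) * p}%N by move=> i; rewrite inE => /divnK.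
have z_ndvd : {in V, forall i, ~~ (p %| y i %/ p)%N}.
  move=> i /y_V y_i; apply: contra (y_ndvd i) => /dvdnP[k hk].
  by rewrite y_i hk -mulnA mulnn dvdn_mull.
have pR : (p %| p * \sum_(i in ~: V) y i)%N by apply: dvdn_mulr.
have [t [pt t_sol]] := sq_weighted_sum_dvd_pow 2 p_pr p_ge7 V_ge3 z_ndvd pR.
exists (fun i => if i \in V then t i else p); split.
  by move=> i; case: ifPn => // /pt; apply: sqr_p2_ndvd.
rewrite (split_sum V) (eq_bigr (fun i => p * (t i * t i * (y i %/ p)))%N); last first.
  by move=> i V_i; rewrite V_i {1}(y_V i V_i); ring.
rewrite [X in (_ %| _ + X)%N](eq_bigr (fun i => p * (p * y i)))%N; last first.
  by move=> i; rewrite inE => /negbTE ->; ring.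
by rewrite -!(big_distrr p) /= -mulnDr expnS dvdn_pmul2l ?prime_gt0.
Qed.

Lemma sq_weights_pow_dvd (T : finType) (y : T -> nat) :
  (5 <= #|T|)%N -> (forall i, ~~ (p ^ 2 %| y i)%N) ->
  exists w : T -> nat, (forall i, ~~ (p ^ 2 %| w i)%N) /\ (p ^ 4 %| \sum_i w i * w i * y i)%N.
Proof.
move=> T_ge5 y_ndvd.
have [U_ge3 | U_lt3] := leqP 3 #|[set i | ~~ (p %| y i)%N]|.
  exact: sq_weights_of_many_units.
apply: sq_weights_of_many_multiples => //.
have -> : [set i | (p %| y i)%N] = ~: [set i | ~~ (p %| y i)%N].
  by apply/setP => i; rewrite !inE negbK.
by have := cardsC [set i | ~~ (p %| y i)%N]; lia.
Qed.

Lemma consec_zs_property_5 : consec_zs_property (sq_set_star n) 5.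
Proof.
move=> s s5.
have [i p2_si | p2_ndvd] := pickP (fun i : 'I_5 => (p ^ 2 %| val (s`_i)%R)%N).
  have i_lt : (i < size s)%N by rewrite s5.
  exists i, i.+1; split => //.
  rewrite (take_nth 0 i_lt) -cats1 drop_size_cat ?size_take ?i_lt //.
  apply: (@weighted_zero_sum_of_pow_dvd _ (fun=> p)) => [_ _ //|].
  by rewrite big_ord1 [X in (X %| _)%N](expnD p 2 2) mulnn dvdn_mul.
exists 0%N, 5%N; split => //; rewrite drop0 take_oversize ?s5 //.
have card5 : (5 <= #|'I_5|)%N by rewrite card_ord.
have [w [w_ndvd w_sum]] := sq_weights_pow_dvd card5 (fun i => negbT (p2_ndvd i)).
apply: (@weighted_zero_sum_of_pow_dvd _ (fun i => w (inord i))) => [i _ //|].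
by rewrite s5 (eq_bigr (fun i => w i * w i * val (s`_i)%R)%N) // => i _; rewrite inord_val.
Qed.

End UpperBound.

Definition neg_nonres (q c : nat) : bool := ~~ is_square (- c%:R : 'F_q).

Lemma neg_nonres_sqr_add_dvd q c a b : prime q -> neg_nonres q c ->
  (q %| a * a + c * (b * b))%N -> (q %| a)%N /\ (q %| b)%N.
Proof.
move=> q_pr nr; rewrite -Fp_nat_eq0 // natrD !natrM addr_eq0 => /eqP form0.
have b0 : (b%:R : 'F_q) == 0.
  apply: contraNT nr => b_neq0; apply/is_squareP; exists (a%:R / b%:R).
  by rewrite mulrACA form0; field.
move: form0; rewrite (eqP b0) !mulr0 oppr0 => /eqP; rewrite mulf_eq0 orbb.
by rewrite -!Fp_nat_eq0.
Qed.

Definition quad_form (P c x1 x2 x3 x4 : nat) : nat :=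
  x1 * x1 + x2 * x2 * P + x3 * x3 * c + x4 * x4 * (c * P).

Lemma quad_form_pow_dvd q c r e x1 x2 x3 x4 : prime q -> neg_nonres q c -> ~~ (q %| r)%N ->
  (q ^ (2 * e) %| quad_form (q * r) c x1 x2 x3 x4)%N ->
  [/\ q ^ e %| x1, q ^ e %| x2, q ^ e %| x3 & q ^ e %| x4]%N.
Proof.
move=> q_pr nr q_r; elim: e x1 x2 x3 x4 => [|e IH] x1 x2 x3 x4; first by rewrite !expn0 !dvd1n.
rewrite mulnS expnD => form_dvd.
have q2_form := dvdn_trans (dvdn_mulr _ (dvdnn _)) form_dvd.
have [/dvdnP[y1 def_x1] /dvdnP[y3 def_x3]] : (q %| x1)%N /\ (q %| x3)%N.
  apply: (neg_nonres_sqr_add_dvd q_pr nr).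
  have := dvdn_trans (dvdn_mulr q (dvdnn q)) q2_form.
  rewrite (_ : quad_form _ _ _ _ _ _ = x1 * x1 + c * (x3 * x3) + q * (r * (x2 * x2 + c * (x4 * x4))))%N.
    by rewrite dvdn_addl // dvdn_mulr.
  by rewrite /quad_form; ring.
subst x1 x3.
have [/dvdnP[y2 def_x2] /dvdnP[y4 def_x4]] : (q %| x2)%N /\ (q %| x4)%N.
  apply: (neg_nonres_sqr_add_dvd q_pr nr).
  have : (q ^ 2 %| q * (r * (x2 * x2 + c * (x4 * x4))))%N.
    move: q2_form; rewrite (_ : quad_form _ _ _ _ _ _ =
      q ^ 2 * (y1 * y1 + c * (y3 * y3)) + q * (r * (x2 * x2 + c * (x4 * x4))))%N.
      by rewrite dvdn_addr // dvdn_mulr.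
    by rewrite /quad_form; ring.
  by rewrite -mulnn dvdn_pmul2l ?prime_gt0 // Euclid_dvdM // (negbTE q_r).
subst x2 x4.
have scale z1 z2 z3 z4 : quad_form (q * r) c (z1 * q) (z2 * q) (z3 * q) (z4 * q) =
    (q ^ 2 * quad_form (q * r) c z1 z2 z3 z4)%N by rewrite /quad_form; ring.
move: form_dvd; rewrite scale dvdn_pmul2l ?expn_gt0 ?prime_gt0 // => /IH[].
by rewrite !expnSr; split; apply: dvdn_mul.
Qed.

Lemma prime_ndvd_prod q l : prime q -> all prime l -> q \notin l ->
  ~~ (q %| \prod_(r <- l) r)%N.
Proof.
move=> q_pr l_pr; apply: contra; rewrite Euclid_dvd_prod // big_has => /hasP[r r_l].
by rewrite dvdn_prime2 ?(allP l_pr r r_l) // => /eqP->.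
Qed.

Definition rad (m : nat) : nat := \prod_(q <- primes m) q.

Lemma rad_split q m : q \in primes m -> exists r, rad m = (q * r)%N /\ ~~ (q %| r)%N.
Proof.
move=> q_m; exists (\prod_(r <- rem q (primes m)) r); split; first by rewrite /rad (big_rem q q_m).
apply: prime_ndvd_prod; first exact: (allP (all_prime_primes m)).
  by apply/allP => r /mem_rem /(allP (all_prime_primes m)).
by rewrite mem_rem_uniqF ?primes_uniq.
Qed.

Lemma quad_form_rad_dvd m c x1 x2 x3 x4 : (0 < m)%N ->
  {in primes m, forall q, neg_nonres q c} ->
  (m * m %| quad_form (rad m) c x1 x2 x3 x4)%N ->
  [/\ m %| x1, m %| x2, m %| x3 & m %| x4]%N.
Proof.
move=> m_gt0 c_nonres m2_form.
have part_dvd q : q \in \pi(m) -> [/\ m`_q %| x1, m`_q %| x2, m`_q %| x3 & m`_q %| x4]%N.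
  move=> q_m; have q_pr : prime q by move: q_m; rewrite mem_primes => /andP[].
  have [r [rad_m q_r]] := rad_split q_m.
  rewrite p_part; apply: (quad_form_pow_dvd q_pr (c_nonres q q_m) q_r).
  rewrite -rad_m; apply: dvdn_trans m2_form; rewrite mul2n -addnn expnD -p_part.
  by apply: dvdn_mul; apply: dvdn_part.
by split; apply/(dvdn_partP _ m_gt0) => q /part_dvd[].
Qed.

Lemma exists_neg_nonres q : prime q -> odd q -> exists c, neg_nonres q c.
Proof.
move=> q_pr q_odd; have [t t_nsq] := exists_nonsquare q_pr q_odd.
by exists (val (- t)); rewrite /neg_nonres natr_Zp opprK.
Qed.

Lemma neg_nonres_mod q c c' : prime q -> c = c' %[mod q] -> neg_nonres q c = neg_nonres q c'.
Proof. by move=> q_pr c_c'; rewrite /neg_nonres -Fp_nat_mod // c_c' Fp_nat_mod. Qed.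

Lemma exists_common_neg_nonres l : all prime l -> uniq l -> all odd l ->
  exists c, {in l, forall q, neg_nonres q c}.
Proof.
elim: l => [|q l IH] /=; first by exists 0%N.
case/andP=> q_pr l_pr /andP[q_l l_uniq] /andP[q_odd l_odd].
have [c' c'_nonres] := IH l_pr l_uniq l_odd.
have [c1 c1_nonres] := exists_neg_nonres q_pr q_odd.
have cop : coprime q (\prod_(r <- l) r) by rewrite prime_coprime // prime_ndvd_prod.
exists (chinese q (\prod_(r <- l) r) c1 c') => r; rewrite inE => /predU1P[-> | r_l].
  by rewrite (neg_nonres_mod q_pr (chinese_modl cop c1 c')).
have r_prod : (r %| \prod_(s <- l) s)%N by rewrite (big_rem r r_l) dvdn_mulr.
rewrite (neg_nonres_mod (allP l_pr r r_l) (_ : _ = c' %[mod r])) ?c'_nonres //.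
by rewrite -(modn_dvdm _ r_prod) chinese_modr // (modn_dvdm _ r_prod).
Qed.

Lemma weighted_sum_drop_take (R : pzSemiRingType) (s a : seq R) i j :
  (i <= j <= size s)%N -> size a = (j - i)%N ->
  \sum_(k < size (drop i (take j s))) a`_k * (drop i (take j s))`_k =
  \sum_(l < size s) (if (i <= l < j)%N then a`_(l - i) else 0) * s`_l.
Proof.
move=> /andP[ij js] size_a.
have -> : size (drop i (take j s)) = (j - i)%N by rewrite size_drop size_take_min; lia.
rewrite -(big_mkord xpredT (fun k => a`_k * (drop i (take j s))`_k)).
set F := fun l => (if (i <= l < j)%N then a`_(l - i) else 0) * s`_l.
rewrite -(big_mkord xpredT F) [RHS](big_cat_nat (n := i)) //; last lia.
rewrite [X in _ = _ + X](big_cat_nat (n := j)) //=.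
rewrite [X in X + _]big1_seq => [|l]; last first.
  by rewrite mem_index_iota /F => /andP[_ /andP[_ l_i]]; rewrite leqNgt l_i mul0r.
rewrite [X in _ + (_ + X)]big1_seq => [|l]; last first.
  by rewrite mem_index_iota /F => /andP[_ /andP[j_l _]]; rewrite ltnNge j_l andbF mul0r.
have -> : \sum_(i <= l < j) F l = \sum_(0 <= k < j - i) F (k + i)%N.
  by rewrite -{1}[i]add0n big_addn.
rewrite add0r addr0; apply: eq_big_nat => k /andP[_ k_lt].
rewrite /F (_ : (i <= k + i < j)%N = true) ?addnK; last by apply/andP; split; lia.
by rewrite nth_drop nth_take 1?addnC //; lia.
Qed.

Section LowerBound.

Variables (m c : nat).
Hypotheses (m_gt1 : (1 < m)%N) (c_nonres : {in primes m, forall q, neg_nonres q c}).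

Local Notation s := ([:: 1; (rad m)%:R; c%:R; (c * rad m)%:R] : seq 'Z_(m * m)).

Let mm_gt1 : (1 < m * m)%N. Proof. by nia. Qed.

Lemma sq_weights_vanish (b : nat -> 'Z_(m * m)) : (forall l, b l \in sq_set (m * m)) ->
  \sum_(l < 4) b l * s`_l = 0 -> forall l, (l < 4)%N -> b l = 0.
Proof.
move=> b_sq sum0.
have sq_nat l : exists x, b l = (x * x)%:R.
  by have /imsetP[y _ ->] := b_sq l; exists (val y); rewrite natrM natr_Zp.
have [x0 e0] := sq_nat 0%N; have [x1 e1] := sq_nat 1%N.
have [x2 e2] := sq_nat 2%N; have [x3 e3] := sq_nat 3%N.
have /eqP : ((quad_form (rad m) c x0 x1 x2 x3)%:R : 'Z_(m * m)) = 0.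
  rewrite -[RHS]sum0 !big_ord_recl big_ord0 /= e0 e1 e2 e3 /quad_form !natrD !natrM; ring.
rewrite Zn_nat_eq0 // => /quad_form_rad_dvd[]; rewrite ?(ltnW m_gt1) // => m_x0 m_x1 m_x2 m_x3.
have sqr0 x : (m %| x)%N -> ((x * x)%:R : 'Z_(m * m)) = 0.
  by move=> m_x; apply/eqP; rewrite Zn_nat_eq0 // dvdn_mul.
by case=> [|[|[|[|]]]] // _; rewrite ?e0 ?e1 ?e2 ?e3 sqr0.
Qed.

Lemma infix_not_weighted_zero_sum i j : (i < j <= 4)%N ->
  ~ weighted_zero_sum (sq_set_star (m * m)) (drop i (take j s)).
Proof.
move=> /andP[ij j4] [a [size_a a_star sum0]].
rewrite size_drop size_take_min /= in size_a.
rewrite weighted_sum_drop_take ?(ltnW ij) // in sum0; last by rewrite size_a; lia.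
have a_nz k : (k < j - i)%N -> a`_k \in sq_set_star (m * m).
  by move=> k_lt; apply: (allP a_star); apply: mem_nth; rewrite size_a; lia.
pose b l := if (i <= l < j)%N then a`_(l - i) else 0.
have b_sq l : b l \in sq_set (m * m).
  rewrite /b; case: ifP => [/andP[il lj] | _]; last by apply/imsetP; exists 0; rewrite ?mulr0.
  by apply: (subsetP (subD1set _ _)); apply: a_nz; lia.
have := sq_weights_vanish b_sq sum0 (leq_trans ij j4).
rewrite /b leqnn ij subnn /= => a0.
by have := a_nz 0%N; rewrite subn_gt0 ij a0 => /(_ isT)/setD1P[/eqP].
Qed.

End LowerBound.

Lemma not_consec_zs_property_le4 m t : (1 < m)%N -> odd m -> (t <= 4)%N ->
  ~ consec_zs_property (sq_set_star (m * m)) t.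
Proof.
move=> m_gt1 m_odd t_le4 zs.
have odd_primes : all odd (primes m).
  apply/allP => q; rewrite mem_primes => /and3P[q_pr _ q_m].
  by case: (even_prime q_pr) => // q2; move: q_m; rewrite q2 dvdn2 m_odd.
have [c c_nonres] := exists_common_neg_nonres (all_prime_primes m) (primes_uniq m) odd_primes.
have [|i [j [ij jt]]] := zs (take t [:: 1; (rad m)%:R; c%:R; (c * rad m)%:R]).
  by rewrite size_takel.
rewrite -take_min (minn_idPl jt).
apply: (infix_not_weighted_zero_sum m_gt1 c_nonres); rewrite ij; lia.
Qed.

Theorem mainTheorem18 (n : nat) :
  odd n -> (exists m : nat, n = (m * m)%N) ->
  (exists p : nat, [/\ prime p, (7 <= p)%N & (p ^ 4 %| n)%N]) ->
  is_C (sq_set_star n) 5.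
Proof.
move=> n_odd [m def_n] [p [p_pr p_ge7 p4_n]]; subst n.
have m_odd : odd m by move: n_odd; rewrite oddM andbb.
have [M def_m] : exists M, m = (M * p ^ 2)%N.
  by apply/dvdnP; apply: pfactor2_dvd_of_sqr p_pr p4_n.
have M_gt0 : (0 < M)%N by case: M def_m m_odd => // ->.
have m_gt1 : (1 < m)%N.
  by rewrite def_m (leq_trans _ (leq_pmull _ M_gt0)) // -(exp1n 2) ltn_exp2r // prime_gt1.
split=> // [|t _ t_lt5]; last exact: not_consec_zs_property_le4.
have -> : (m * m = M * M * p ^ 4)%N by rewrite def_m; ring.
exact: consec_zs_property_5.
Qed.
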